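(* Let $p,q\ge2$, $\mu\in\mathbb{C}\setminus\{0\}$ and $P(u,v;\mu)=\mu(u^p+\bar u)+v^q+\bar v$, regarded as a map $\mathbb{R}^4\to\mathbb{R}^2$. If $z_0=(u_0,v_0)$ is a singular point of $P$ (a point where its real differential has rank $<2$), then $p|u_0|^{p-1}=q|v_0|^{q-1}=1$ (in particular $u_0v_0\neq0$) and, for any choice of real representatives of $\arg u_0,\arg v_0,\arg\mu$, there is an integer $\kappa$ with $\frac{p-1}{2}\arg u_0+\arg\mu=\frac{q-1}{2}\arg v_0+\kappa\pi$. *)

From Stdlib Require Import Reals ZArith.
Open Scope R_scope.

(* Complex numbers as (real part, imaginary part). *)
Definition Cx : Type := (R * R)%type.
Definition C0 : Cx := (0, 0).
Definition C1 : Cx := (1, 0).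
Definition Cadd (z w : Cx) : Cx := (fst z + fst w, snd z + snd w).
Definition Cmul (z w : Cx) : Cx :=
  (fst z * fst w - snd z * snd w, fst z * snd w + snd z * fst w).
Definition Cconj (z : Cx) : Cx := (fst z, - snd z).
Fixpoint Cpow (z : Cx) (n : nat) : Cx :=
  match n with O => C1 | S m => Cmul z (Cpow z m) end.
Definition Cmod (z : Cx) : R := sqrt (fst z ^ 2 + snd z ^ 2).

Definition Pfun (p q : nat) (mu u v : Cx) : Cx :=
  Cadd (Cadd (Cmul mu (Cadd (Cpow u p) (Cconj u))) (Cpow v q)) (Cconj v).

(* P regarded as a map R^4 -> R^2; coordinates x 0, x 1, x 2, x 3 are
   Re u, Im u, Re v, Im v; output components 0, 1 are Re P, Im P. *)
Definition Preal (p q : nat) (mu : Cx) (x : nat -> R) : Cx :=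
  Pfun p q mu (x 0%nat, x 1%nat) (x 2%nat, x 3%nat).
Definition comp (i : nat) (z : Cx) : R := if Nat.eqb i 0 then fst z else snd z.
Definition coords (u v : Cx) : nat -> R :=
  fun k => match k with 0%nat => fst u | 1%nat => snd u | 2%nat => fst v | _ => snd v end.
Definition upd (x : nat -> R) (j : nat) (t : R) : nat -> R :=
  fun k => if Nat.eqb k j then x k + t else x k.

Definition is_jacobian (p q : nat) (mu : Cx) (x : nat -> R) (J : nat -> nat -> R) : Prop :=
  forall i j, (i < 2)%nat -> (j < 4)%nat ->
    derivable_pt_lim (fun t => comp i (Preal p q mu (upd x j t))) 0 (J i j).

(* A 2x4 matrix has rank < 2 iff its two rows are linearly dependent. *)
Definition rank_lt_2 (J : nat -> nat -> R) : Prop :=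
  exists a b : R, (a <> 0 \/ b <> 0) /\
    forall j, (j < 4)%nat -> a * J 0%nat j + b * J 1%nat j = 0.

Definition singular_point (p q : nat) (mu u v : Cx) : Prop :=
  exists J, is_jacobian p q mu (coords u v) J /\ rank_lt_2 J.

Definition is_arg (z : Cx) (theta : R) : Prop :=
  z <> C0 /\ fst z = Cmod z * cos theta /\ snd z = Cmod z * sin theta.

From Pilot Require Import Defs.
From Stdlib Require Import Reals ZArith Lra Lia Psatz.
Open Scope R_scope.

(* Let (a, b) be a nonzero pair killing the rows of the Jacobian and put
   c := a - i b.  The column of P along a direction h of the u-plane is
   mu (E h + conj h) with E = p u^(p-1), and a J_0 + b J_1 is its real part
   after multiplication by c; its vanishing for h = 1 and h = i means
   g E = - conj g for g = c mu.  Likewise c F = - conj c with F = q v^(q-1).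
   Taking moduli gives |E| = |F| = 1; squaring, g^2 E = - |g|^2 and
   c^2 F = - |c|^2, so mu^2 E = |mu|^2 F, and comparing arguments modulo 2 pi
   gives 2 arg mu + (p-1) arg u = (q-1) arg v + 2 kappa pi. *)

Definition Copp (z : Cx) : Cx := (- fst z, - snd z).
Definition Nsq (z : Cx) : R := fst z ^ 2 + snd z ^ 2.
Definition expi (t : R) : Cx := (cos t, sin t).

Definition Cpow_deriv (n : nat) (z : Cx) : Cx := Cmul (INR n, 0) (Cpow z (n - 1)).

Lemma Cmul_assoc z w s : Cmul z (Cmul w s) = Cmul (Cmul z w) s.
Proof. destruct z, w, s; unfold Cmul; simpl; f_equal; ring. Qed.

Lemma Nsq_Cmul z w : Nsq (Cmul z w) = Nsq z * Nsq w.
Proof. destruct z, w; unfold Nsq, Cmul; simpl; ring. Qed.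

Lemma Nsq_Cpow z n : Nsq (Cpow z n) = Nsq z ^ n.
Proof.
  induction n as [|n IH]; simpl Cpow.
  - unfold Nsq, Defs.C1; simpl; ring.
  - rewrite Nsq_Cmul, IH; simpl; ring.
Qed.

Lemma Nsq_ge0 z : 0 <= Nsq z.
Proof. destruct z; unfold Nsq; simpl; nra. Qed.

Lemma Nsq_gt0 z : z <> C0 -> 0 < Nsq z.
Proof.
  intros Hz; destruct z as [x y]; unfold Nsq; simpl.
  destruct (Req_dec x 0), (Req_dec y 0); subst; try nra.
  exfalso; apply Hz; reflexivity.
Qed.

Lemma Nsq_gt0_neq0 z : 0 < Nsq z -> z <> C0.
Proof. intros H ->; unfold Nsq, C0 in H; simpl in H; lra. Qed.

Lemma Cmod_sqr z : Cmod z ^ 2 = Nsq z.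
Proof. apply pow2_sqrt, Nsq_ge0. Qed.

Lemma Cmul_neq0 z w : z <> C0 -> w <> C0 -> Cmul z w <> C0.
Proof.
  intros Hz Hw; apply Nsq_gt0_neq0; rewrite Nsq_Cmul.
  apply Rmult_lt_0_compat; apply Nsq_gt0; assumption.
Qed.

Lemma Cmul_cancel_l g z w : g <> C0 -> Cmul g z = Cmul g w -> z = w.
Proof.
  intros Hg H. pose proof (Nsq_gt0 g Hg) as Hn.
  destruct g as [g1 g2], z as [z1 z2], w as [w1 w2]; unfold Cmul, Nsq in *; simpl in *.
  injection H; intros H2 H1.
  (* multiply by conj g *)
  assert (E1 : (g1 ^ 2 + g2 ^ 2) * (z1 - w1) = 0).
  { transitivity (g1 * ((g1 * z1 - g2 * z2) - (g1 * w1 - g2 * w2))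
                  + g2 * ((g1 * z2 + g2 * z1) - (g1 * w2 + g2 * w1))); [ring|].
    rewrite H1, H2; ring. }
  assert (E2 : (g1 ^ 2 + g2 ^ 2) * (z2 - w2) = 0).
  { transitivity (g1 * ((g1 * z2 + g2 * z1) - (g1 * w2 + g2 * w1))
                  - g2 * ((g1 * z1 - g2 * z2) - (g1 * w1 - g2 * w2))); [ring|].
    rewrite H1, H2; ring. }
  apply Rmult_integral in E1; apply Rmult_integral in E2.
  f_equal; lra.
Qed.

Lemma expi_add s t : expi (s + t) = Cmul (expi s) (expi t).
Proof. unfold expi, Cmul; simpl; rewrite cos_plus, sin_plus; f_equal; ring. Qed.

Lemma Nsq_expi t : Nsq (expi t) = 1.
Proof. pose proof (sin2_cos2 t); unfold Rsqr in *; unfold Nsq, expi; cbn [fst snd]; nra. Qed.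

Lemma is_arg_polar z th : is_arg z th -> z = Cmul (Cmod z, 0) (expi th).
Proof.
  intros [_ [H1 H2]]; destruct z as [x y]; unfold Cmul, expi; simpl in *.
  f_equal; [rewrite H1 at 1 | rewrite H2 at 1]; ring.
Qed.

Lemma Cpow_polar r th n :
  Cpow (Cmul (r, 0) (expi th)) n = Cmul (r ^ n, 0) (expi (INR n * th)).
Proof.
  induction n as [|n IH].
  - cbn [Cpow]; unfold Cmul, expi, Defs.C1; simpl; rewrite Rmult_0_l, cos_0, sin_0; f_equal; ring.
  - cbn [Cpow]; rewrite IH, S_INR.
    replace ((INR n + 1) * th) with (th + INR n * th) by ring.
    rewrite expi_add; unfold expi, Cmul; simpl; f_equal; ring.
Qed.

Lemma expi_eq s t : expi s = expi t -> exists k : Z, s = t + 2 * IZR k * PI.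
Proof.
  unfold expi; intros E; injection E; intros Hsin Hcos.
  assert (Hcos1 : cos (2 * ((s - t) / 2)) = 1).
  { replace (2 * ((s - t) / 2)) with (s - t) by field.
    rewrite cos_minus, Hcos, Hsin, <- (sin2_cos2 t); unfold Rsqr; ring. }
  rewrite cos_2a_sin in Hcos1.
  assert (Hsin0 : sin ((s - t) / 2) = 0) by nra.
  destruct (sin_eq_0_0 _ Hsin0) as [k Hk]; exists k; lra.
Qed.

Definition Cder (z : R -> Cx) (t : R) (d : Cx) : Prop :=
  derivable_pt_lim (fun s => fst (z s)) t (fst d) /\
  derivable_pt_lim (fun s => snd (z s)) t (snd d).

Lemma Cder_ext z t d d' : Cder z t d -> d = d' -> Cder z t d'.
Proof. intros H ->; exact H. Qed.

Lemma Cder_const c t : Cder (fun _ => c) t C0.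
Proof. split; apply derivable_pt_lim_const. Qed.

Lemma Cder_add z w t dz dw : Cder z t dz -> Cder w t dw ->
  Cder (fun s => Cadd (z s) (w s)) t (Cadd dz dw).
Proof.
  intros [H1 H2] [H3 H4]; split.
  - exact (derivable_pt_lim_plus _ _ _ _ _ H1 H3).
  - exact (derivable_pt_lim_plus _ _ _ _ _ H2 H4).
Qed.

Lemma Cder_conj z t dz : Cder z t dz -> Cder (fun s => Cconj (z s)) t (Cconj dz).
Proof. intros [H1 H2]; split; [exact H1 | exact (derivable_pt_lim_opp _ _ _ H2)]. Qed.

Lemma Cder_mul z w t dz dw : Cder z t dz -> Cder w t dw ->
  Cder (fun s => Cmul (z s) (w s)) t (Cadd (Cmul dz (w t)) (Cmul (z t) dw)).
Proof.
  intros [H1 H2] [H3 H4]; split.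
  - replace (fst _) with
      (fst dz * fst (w t) + fst (z t) * fst dw - (snd dz * snd (w t) + snd (z t) * snd dw))
      by (unfold Cmul, Cadd; simpl; ring).
    exact (derivable_pt_lim_minus _ _ _ _ _
      (derivable_pt_lim_mult _ _ _ _ _ H1 H3) (derivable_pt_lim_mult _ _ _ _ _ H2 H4)).
  - replace (snd _) with
      (fst dz * snd (w t) + fst (z t) * snd dw + (snd dz * fst (w t) + snd (z t) * fst dw))
      by (unfold Cmul, Cadd; simpl; ring).
    exact (derivable_pt_lim_plus _ _ _ _ _
      (derivable_pt_lim_mult _ _ _ _ _ H1 H4) (derivable_pt_lim_mult _ _ _ _ _ H2 H3)).
Qed.

Lemma Cpow_deriv_S n z : Cpow_deriv (S n) z = Cmul (INR (S n), 0) (Cpow z n).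
Proof. unfold Cpow_deriv; simpl; rewrite Nat.sub_0_r; reflexivity. Qed.

Lemma Cder_pow z t dz n : Cder z t dz ->
  Cder (fun s => Cpow (z s) (S n)) t (Cmul (Cpow_deriv (S n) (z t)) dz).
Proof.
  intros Hz; rewrite Cpow_deriv_S; induction n as [|n IH].
  - eapply Cder_ext; [exact (Cder_mul _ _ _ _ _ Hz (Cder_const Defs.C1 t))|].
    destruct (z t), dz; unfold Cmul, Cadd, Defs.C1, C0; simpl; f_equal; ring.
  - eapply Cder_ext; [exact (Cder_mul _ _ _ _ _ Hz IH)|].
    rewrite (S_INR (S n)); cbn [Cpow].
    generalize (INR (S n)) (Cpow (z t) n); intros N [c d].
    destruct (z t) as [a b], dz as [e f]; unfold Cmul, Cadd; simpl; f_equal; ring.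
Qed.

Lemma Cder_shift_re a b : Cder (fun s => (a + s, b)) 0 (1, 0).
Proof.
  split; simpl; [|apply derivable_pt_lim_const].
  rewrite <- (Rplus_0_l 1).
  exact (derivable_pt_lim_plus _ _ _ _ _ (derivable_pt_lim_const a 0) (derivable_pt_lim_id 0)).
Qed.

Lemma Cder_shift_im a b : Cder (fun s => (a, b + s)) 0 (0, 1).
Proof.
  split; simpl; [apply derivable_pt_lim_const|].
  rewrite <- (Rplus_0_l 1).
  exact (derivable_pt_lim_plus _ _ _ _ _ (derivable_pt_lim_const b 0) (derivable_pt_lim_id 0)).
Qed.

Lemma Cder_Pfun_u p q mu v z t h : (1 <= p)%nat -> Cder z t h ->
  Cder (fun s => Pfun p q mu (z s) v) t
    (Cmul mu (Cadd (Cmul (Cpow_deriv p (z t)) h) (Cconj h))).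
Proof.
  intros Hp Hz; destruct p as [|p]; [lia|].
  eapply Cder_ext.
  - unfold Pfun.
    apply (Cder_add _ (fun _ => Cconj v)); [|apply Cder_const].
    apply (Cder_add _ (fun _ => Cpow v q)); [|apply Cder_const].
    apply (Cder_mul (fun _ => mu)); [apply Cder_const|].
    apply Cder_add; [apply Cder_pow | apply Cder_conj]; exact Hz.
  - generalize (Cpow_deriv (S p) (z t)); intros [e f].
    destruct mu, h; unfold Cmul, Cadd, Cconj, C0; simpl; f_equal; ring.
Qed.

Lemma Cder_Pfun_v p q mu u z t h : (1 <= q)%nat -> Cder z t h ->
  Cder (fun s => Pfun p q mu u (z s)) t (Cadd (Cmul (Cpow_deriv q (z t)) h) (Cconj h)).
Proof.
  intros Hq Hz; destruct q as [|q]; [lia|].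
  eapply Cder_ext.
  - unfold Pfun.
    apply Cder_add; [|apply Cder_conj; exact Hz].
    apply (Cder_add (fun _ => Cmul mu (Cadd (Cpow u p) (Cconj u)))); [apply Cder_const|].
    apply Cder_pow; exact Hz.
  - generalize (Cmul (Cpow_deriv (S q) (z t)) h); intros [e f].
    unfold Cadd, C0; simpl; f_equal; ring.
Qed.

Lemma jacobian_column p q mu x J j d : is_jacobian p q mu x J -> (j < 4)%nat ->
  Cder (fun t => Preal p q mu (upd x j t)) 0 d -> J 0%nat j = fst d /\ J 1%nat j = snd d.
Proof.
  intros HJ Hj [Hre Him]; split; eapply uniqueness_limite;
    [apply (HJ 0%nat j) | exact Hre | apply (HJ 1%nat j) | exact Him]; lia.
Qed.

Lemma reflection_of_columns g E :
  fst (Cmul g (Cadd (Cmul E (1, 0)) (Cconj (1, 0)))) = 0 ->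
  fst (Cmul g (Cadd (Cmul E (0, 1)) (Cconj (0, 1)))) = 0 ->
  Cmul g E = Copp (Cconj g).
Proof.
  destruct g as [g1 g2], E as [e1 e2]; unfold Cmul, Cadd, Cconj, Copp; simpl.
  intros H1 H2; f_equal; nra.
Qed.

Lemma reflection_Nsq g E : g <> C0 -> Cmul g E = Copp (Cconj g) -> Nsq E = 1.
Proof.
  intros Hg H.
  assert (HN : Nsq g * Nsq E = Nsq g * 1).
  { rewrite <- Nsq_Cmul, H; destruct g; unfold Nsq, Copp, Cconj; simpl; ring. }
  apply Rmult_eq_reg_l in HN; [exact HN | apply Rgt_not_eq, Nsq_gt0, Hg].
Qed.

Lemma reflection_sqr g E : Cmul g E = Copp (Cconj g) -> Cmul (Cmul g g) E = (- Nsq g, 0).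
Proof.
  intros H; rewrite <- Cmul_assoc, H.
  destruct g; unfold Cmul, Copp, Cconj, Nsq; simpl; f_equal; ring.
Qed.

Lemma singular_point_reflection p q mu u v : (1 <= p)%nat -> (1 <= q)%nat ->
  singular_point p q mu u v ->
  exists c, c <> C0 /\
    Cmul (Cmul c mu) (Cpow_deriv p u) = Copp (Cconj (Cmul c mu)) /\
    Cmul c (Cpow_deriv q v) = Copp (Cconj c).
Proof.
  intros Hp Hq [J [HJ [a [b [Hab Hrows]]]]].
  assert (Hcol : forall j d, (j < 4)%nat ->
            Cder (fun t => Preal p q mu (upd (coords u v) j t)) 0 d ->
            fst (Cmul (a, - b) d) = 0).
  { intros j d Hj Hd; destruct (jacobian_column _ _ _ _ _ _ _ HJ Hj Hd) as [E0 E1].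
    specialize (Hrows j Hj); rewrite E0, E1 in Hrows.
    unfold Cmul; simpl; lra. }
  destruct u as [u1 u2], v as [v1 v2].
  exists (a, - b); split; [|split].
  - intros E; injection E; intros; lra.
  - apply reflection_of_columns; rewrite <- Cmul_assoc.
    + apply (Hcol 0%nat); [lia|].
      pose proof (Cder_Pfun_u p q mu (v1, v2) _ _ _ Hp (Cder_shift_re u1 u2)) as H.
      cbv beta in H; rewrite Rplus_0_r in H; exact H.
    + apply (Hcol 1%nat); [lia|].
      pose proof (Cder_Pfun_u p q mu (v1, v2) _ _ _ Hp (Cder_shift_im u1 u2)) as H.
      cbv beta in H; rewrite Rplus_0_r in H; exact H.
  - apply reflection_of_columns.
    + apply (Hcol 2%nat); [lia|].
      pose proof (Cder_Pfun_v p q mu (u1, u2) _ _ _ Hq (Cder_shift_re v1 v2)) as H.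
      cbv beta in H; rewrite Rplus_0_r in H; exact H.
    + apply (Hcol 3%nat); [lia|].
      pose proof (Cder_Pfun_v p q mu (u1, u2) _ _ _ Hq (Cder_shift_im v1 v2)) as H.
      cbv beta in H; rewrite Rplus_0_r in H; exact H.
Qed.

Lemma Cpow_deriv_Nsq1 n z : Nsq (Cpow_deriv n z) = 1 -> INR n * Cmod z ^ (n - 1) = 1.
Proof.
  intros H.
  assert (Hsq : (INR n * Cmod z ^ (n - 1)) ^ 2 = 1).
  { rewrite <- H; unfold Cpow_deriv.
    rewrite Nsq_Cmul, Nsq_Cpow, <- (Cmod_sqr z), Rpow_mult_distr, <- !pow_mult, Nat.mul_comm.
    unfold Nsq; simpl; ring. }
  assert (0 <= INR n * Cmod z ^ (n - 1))
    by (apply Rmult_le_pos; [apply pos_INR | apply pow_le, sqrt_pos]).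
  nra.
Qed.

Lemma Cmod_pow_eq1_neq0 n z : (2 <= n)%nat -> INR n * Cmod z ^ (n - 1) = 1 -> z <> C0.
Proof.
  intros Hn H ->.
  replace (Cmod C0) with 0 in H by (unfold Cmod, C0; cbn [fst snd]; rewrite pow_i, Rplus_0_l, sqrt_0 by lia; reflexivity).
  rewrite pow_i in H by lia; lra.
Qed.

Lemma Cpow_deriv_polar n z th : is_arg z th -> INR n * Cmod z ^ (n - 1) = 1 ->
  Cpow_deriv n z = expi (INR (n - 1) * th).
Proof.
  intros Harg H; unfold Cpow_deriv; rewrite (is_arg_polar z th Harg).
  rewrite Cpow_polar; generalize (expi (INR (n - 1) * th)); intros [e f].
  unfold Cmul; simpl; f_equal;
    [transitivity (INR n * Cmod z ^ (n - 1) * e) | transitivity (INR n * Cmod z ^ (n - 1) * f)];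
    solve [ring | rewrite H; ring].
Qed.

Lemma reflection_phases c mu am al be : c <> C0 -> is_arg mu am ->
  Cmul (Cmul c mu) (expi al) = Copp (Cconj (Cmul c mu)) ->
  Cmul c (expi be) = Copp (Cconj c) ->
  expi (2 * am + al) = expi be.
Proof.
  intros Hc Harg Hu Hv.
  apply reflection_sqr in Hu; apply reflection_sqr in Hv.
  assert (Hm : 0 < Cmod mu) by (apply sqrt_lt_R0, Nsq_gt0, Harg).
  rewrite (is_arg_polar mu am Harg) in Hu; clear Harg.
  set (m := Cmod mu) in *; clearbody m.
  apply (Cmul_cancel_l (Cmul (Cmul c c) (m ^ 2, 0))).
  - apply Cmul_neq0; [now apply Cmul_neq0|].
    apply Nsq_gt0_neq0; unfold Nsq; cbn [fst snd]; pose proof (pow_lt m 2 Hm); nra.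
  - replace (2 * am + al) with (am + (am + al)) by ring; rewrite !expi_add.
    transitivity (Cmul (Cmul (Cmul c (Cmul (m, 0) (expi am))) (Cmul c (Cmul (m, 0) (expi am))))
                    (expi al)).
    + generalize (expi am) (expi al); intros [e f] [g h]; destruct c.
      unfold Cmul; simpl; f_equal; ring.
    + rewrite Hu; transitivity (Cmul (m ^ 2, 0) (Cmul (Cmul c c) (expi be))).
      * rewrite Hv, !Nsq_Cmul, Nsq_expi; destruct c; unfold Cmul, Nsq; simpl; f_equal; ring.
      * generalize (expi be); intros [e f]; destruct c; unfold Cmul; simpl; f_equal; ring.
Qed.

Theorem lemma3p2 (p q : nat) (mu u0 v0 : Cx) :
  (2 <= p)%nat -> (2 <= q)%nat -> mu <> C0 ->
  singular_point p q mu u0 v0 ->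
  INR p * Cmod u0 ^ (p - 1) = 1 /\ INR q * Cmod v0 ^ (q - 1) = 1 /\
  u0 <> C0 /\ v0 <> C0 /\
  (forall au av am : R, is_arg u0 au -> is_arg v0 av -> is_arg mu am ->
     exists kappa : Z,
       (INR p - 1) / 2 * au + am = (INR q - 1) / 2 * av + IZR kappa * PI).
Proof.
  intros Hp Hq Hmu Hsing.
  destruct (singular_point_reflection p q mu u0 v0 ltac:(lia) ltac:(lia) Hsing)
    as [c [Hc [Hu Hv]]].
  assert (Mu : INR p * Cmod u0 ^ (p - 1) = 1).
  { apply Cpow_deriv_Nsq1, (reflection_Nsq (Cmul c mu)); [apply Cmul_neq0|]; assumption. }
  assert (Mv : INR q * Cmod v0 ^ (q - 1) = 1).
  { apply Cpow_deriv_Nsq1, (reflection_Nsq c); assumption. }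
  split; [exact Mu|]; split; [exact Mv|].
  split; [exact (Cmod_pow_eq1_neq0 p u0 Hp Mu)|].
  split; [exact (Cmod_pow_eq1_neq0 q v0 Hq Mv)|].
  intros au av am Au Av Am.
  rewrite (Cpow_deriv_polar p u0 au Au Mu) in Hu.
  rewrite (Cpow_deriv_polar q v0 av Av Mv) in Hv.
  destruct (expi_eq _ _ (reflection_phases c mu am _ _ Hc Am Hu Hv)) as [k Hk].
  exists k; rewrite !minus_INR in Hk by lia; simpl INR in Hk; lra.
Qed.
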